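(* Let $p>2$ and let $h:[1,\infty)\to[2/p,\infty)$ be a function which is increasing and continuous on $[1,\infty)$, satisfies $h(t)>t-1$ for all $t\ge1$, is differentiable on $(1,\infty)$ with $$h'(t)=\left(\frac2p\right)^{p+1}(h(t))^{2-p}(h(t)-t+1)^{-2},$$ and satisfies $h(1)=h'(1+)=2/p$. Then $h'(t)\le 1$ for all $t>1$.
   Context: $h'(1+)$ denotes the right-hand derivative of $h$ at $1$. *)

From Stdlib Require Import Reals.
From Coquelicot Require Import Coquelicot.
Open Scope R_scope.

Definition increasing_from1 (h : R -> R) : Prop :=
  forall s t, 1 <= s -> s <= t -> h s <= h t.

Definition continuous_on_from1 (h : R -> R) : Prop :=
  forall t, 1 <= t ->
    filterlim h (within (fun x => 1 <= x) (locally t)) (locally (h t)).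

Definition right_deriv (h : R -> R) (a l : R) : Prop :=
  filterlim (fun s => (h (a + s) - h a) / s) (at_right 0) (locally l).

From Stdlib Require Import Reals Lra.
From Coquelicot Require Import Coquelicot.
Open Scope R_scope.

(* Let F = ode_rhs p h, the right-hand side of the equation, so h' = F on (1, oo), and
   g(t) = h(t) - t + 1 > 0, so g' = F - 1.  F(1) = 2/p < 1.  If F(t0) > 1, let c be
   the last point of [1, t0] with F(c) <= 1.  On (c, t0] we have g' > 0, so
   g(c) <= g(t0); also h(c) <= h(t0).  Since 2 - p < 0, F is antitone in both h and
   g, hence F(t0) <= F(c) <= 1, a contradiction. *)

Lemma Rpower_le_base_nonpos (x y q : R) :
  0 < x -> x <= y -> q <= 0 -> Rpower y q <= Rpower x q.
Proof.
  intros Hx Hxy Hq.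
  replace q with (- (- q)) by ring.
  rewrite (Rpower_Ropp y (- q)), (Rpower_Ropp x (- q)).
  apply Rinv_le_contravar; [apply exp_pos|].
  apply Rle_Rpower_l; lra.
Qed.

Lemma last_point_le (f : R -> R) (a b y : R) :
  a <= b -> f a <= y -> (forall x, a < x <= b -> continuous f x) ->
  exists c, a <= c <= b /\ f c <= y /\ forall s, c < s <= b -> y < f s.
Proof.
  intros Hab Hfa Hcont.
  set (S := fun s => a <= s <= b /\ f s <= y).
  destruct (completeness S) as [c [Hub Hleast]].
  - exists b; intros s [Hs _]; lra.
  - exists a; split; [lra | exact Hfa].
  assert (Hac : a <= c) by (apply Hub; split; [lra | exact Hfa]).
  assert (Hcb : c <= b) by (apply Hleast; intros s [Hs _]; lra).
  assert (Habove : forall s, c < s <= b -> y < f s).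
  { intros s Hs; destruct (Rle_or_lt (f s) y) as [Hfs | Hfs]; [|exact Hfs].
    assert (s <= c) by (apply Hub; split; [lra | exact Hfs]); lra. }
  exists c; split; [lra | split; [|exact Habove]].
  destruct (Req_dec c a) as [-> | Hca]; [exact Hfa|].
  destruct (Rle_or_lt (f c) y) as [Hfc | Hfc]; [exact Hfc | exfalso].
  destruct (Hcont c ltac:(lra) _ (open_gt y (f c) Hfc)) as [[d Hd] Hnear].
  (* f > y on a ball around c, so c - d/2 is already an upper bound of S *)
  assert (Hbound : c <= c - d / 2).
  { apply Hleast; intros s [Hs Hfs].
    destruct (Rle_or_lt s (c - d / 2)) as [|Hsc]; [assumption | exfalso].
    assert (s <= c) by (apply Hub; split; assumption).
    assert (y < f s); [|lra].
    apply Hnear; change (Rabs (s - c) < d); simpl in *.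
    rewrite Rabs_left1; lra. }
  simpl in Hbound; lra.
Qed.

Lemma le_of_derive_nonneg_right (g g' : R -> R) (a b : R) :
  a <= b ->
  (forall x, a < x <= b -> is_derive g x (g' x)) ->
  (forall x, a < x <= b -> 0 <= g' x) ->
  filterlim g (at_right a) (locally (g a)) ->
  g a <= g b.
Proof.
  intros Hab Hder Hpos Hlim.
  destruct (Req_dec a b) as [<- | Hne]; [lra|].
  apply (closed_filterlim_loc g (fun z => z <= g b) (g a) Hlim); [|apply closed_le].
  exists (mkposreal (b - a) ltac:(lra)); intros s Hs Has.
  change (Rabs (s - a) < b - a) in Hs; rewrite Rabs_right in Hs by lra.
  destruct (MVT_cor2 g g' s b) as [x [Hmvt Hx]]; [lra| |].
  - intros x Hx; apply is_derive_Reals, Hder; lra.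
  - assert (0 <= g' x * (b - s)) by (apply Rmult_le_pos; [apply Hpos|]; lra).
    lra.
Qed.

Definition ode_rhs (p : R) (h : R -> R) (t : R) : R :=
  Rpower (2 / p) (p + 1) * Rpower (h t) (2 - p) / (h t - t + 1) ^ 2.

Lemma ode_rhs_1 (p : R) (h : R -> R) :
  0 < p -> h 1 = 2 / p -> ode_rhs p h 1 = 2 / p.
Proof.
  intros Hp H1; unfold ode_rhs; rewrite H1.
  replace (2 / p - 1 + 1) with (2 / p) by ring.
  rewrite <- Rpower_plus.
  replace (p + 1 + (2 - p)) with (INR 3) by (simpl; ring).
  rewrite Rpower_pow by (apply Rdiv_lt_0_compat; lra).
  field; lra.
Qed.

Lemma ode_rhs_antitone (p : R) (h : R -> R) (s t : R) :
  2 <= p -> 0 < h s <= h t -> 0 < h s - s + 1 <= h t - t + 1 ->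
  ode_rhs p h t <= ode_rhs p h s.
Proof.
  intros Hp Hh Hg; unfold ode_rhs, Rdiv.
  apply Rmult_le_compat.
  - apply Rmult_le_pos; left; apply exp_pos.
  - left; apply Rinv_0_lt_compat, pow_lt; lra.
  - apply Rmult_le_compat_l; [left; apply exp_pos|].
    apply Rpower_le_base_nonpos; lra.
  - apply Rinv_le_contravar; [apply pow_lt; lra|].
    apply pow_incr; lra.
Qed.

Lemma ode_rhs_continuous (p : R) (h : R -> R) (t : R) :
  ex_derive h t -> 0 < h t -> h t - t + 1 <> 0 -> continuous (ode_rhs p h) t.
Proof.
  intros Hh Hpos Hgap.
  apply (@ex_derive_continuous R_AbsRing R_NormedModule).
  unfold ode_rhs, Rpower; auto_derive; repeat split; auto.
Qed.

Lemma is_derive_gap (h : R -> R) (t l : R) :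
  is_derive h t l -> is_derive (fun s => h s - s + 1) t (l - 1).
Proof.
  intros Hh; replace (l - 1) with (l - 1 + 0) by ring.
  apply @is_derive_plus; [apply @is_derive_minus; [exact Hh | apply @is_derive_id]|].
  apply @is_derive_const.
Qed.

Lemma gap_right_continuous (h : R -> R) (c : R) :
  1 <= c -> continuous_on_from1 h ->
  filterlim (fun s => h s - s + 1) (at_right c) (locally (h c - c + 1)).
Proof.
  intros Hc Hcont.
  assert (Hright : filter_le (at_right c) (within (fun x => 1 <= x) (locally c))).
  { intros P [d Hd]; exists d; intros x Hx Hcx; apply Hd; [exact Hx | lra]. }
  apply (filterlim_ext (fun s => h s + (1 - s))); [intros s; ring|].
  apply (filterlim_comp_2 (G := locally (h c)) (H := locally (1 - c))
           h (fun s => 1 - s) Rplus).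
  - exact (filterlim_filter_le_1 _ Hright (Hcont c Hc)).
  - apply (filterlim_filter_le_1 _ (filter_le_within _)).
    apply (@ex_derive_continuous R_AbsRing R_NormedModule); auto_derive; exact I.
  - replace (h c - c + 1) with (h c + (1 - c)) by ring.
    exact (@filterlim_plus R_AbsRing R_NormedModule (h c) (1 - c)).
Qed.

Theorem lemma4p1 (p : R) (h : R -> R) :
  2 < p ->
  (forall t, 1 <= t -> 2 / p <= h t) ->
  increasing_from1 h ->
  continuous_on_from1 h ->
  (forall t, 1 <= t -> h t > t - 1) ->
  (forall t, 1 < t ->
     is_derive h t (Rpower (2 / p) (p + 1)
                     * Rpower (h t) (2 - p) / (h t - t + 1) ^ 2)) ->
  h 1 = 2 / p ->
  right_deriv h 1 (2 / p) ->
  forall t, 1 < t -> Derive h t <= 1.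
Proof.
  intros Hp Hlow Hinc Hcont Hgt Hder H1 _ t0 Ht0.
  change (forall t, 1 < t -> is_derive h t (ode_rhs p h t)) in Hder.
  rewrite (is_derive_unique _ _ _ (Hder t0 Ht0)).
  destruct (Rle_or_lt (ode_rhs p h t0) 1) as [|Hbad]; [assumption | exfalso].
  assert (H2p : 0 < 2 / p < 1).
  { split; [apply Rdiv_lt_0_compat; lra|].
    apply Rmult_lt_reg_r with p; [lra|]; field_simplify; lra. }
  assert (Hh : forall t, 1 <= t -> 0 < h t /\ 0 < h t - t + 1).
  { intros t Ht; specialize (Hlow t Ht); specialize (Hgt t Ht); lra. }
  destruct (last_point_le (ode_rhs p h) 1 t0 1) as [c [Hc [Hfc Habove]]]; [lra | | |].
  - rewrite ode_rhs_1 by lra; lra.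
  - intros x Hx; destruct (Hh x ltac:(lra)).
    apply ode_rhs_continuous; [exists (ode_rhs p h x); apply Hder|..]; lra.
  - assert (Hct0 : c < t0) by (destruct (Req_dec c t0) as [->|]; lra).
    assert (Hgap : h c - c + 1 <= h t0 - t0 + 1).
    { apply (le_of_derive_nonneg_right (fun t => h t - t + 1) (fun t => ode_rhs p h t - 1) c t0);
        [lra | | |].
      - intros x Hx; apply is_derive_gap, Hder; lra.
      - intros x Hx; specialize (Habove x Hx); lra.
      - apply gap_right_continuous; [lra | exact Hcont]. }
    assert (ode_rhs p h t0 <= ode_rhs p h c); [|lra].
    destruct (Hh c ltac:(lra)), (Hh t0 ltac:(lra)).
    apply ode_rhs_antitone; [lra | split; [|apply Hinc] | split]; lra.
Qed.
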